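(* $$\lim_{t \to \infty} \sum_{n=0}^{\infty} N_{0,n}(t) = 2,$$ where $t\to\infty$ through the real numbers.
   Context: $N_{0,n}$ denotes the uniform B-spline of degree $n$ with knots $0,1,\ldots,n+1$ and support $[0,n+1]$: $N_{0,0}(t)=\chi_{[0,1]}(t)$ (the indicator of $[0,1]$) and $N_{0,n}(t)=\int_{-\infty}^{\infty} N_{0,n-1}(x)\chi_{[0,1]}(t-x)\,dx = \int_{t-1}^{t}N_{0,n-1}(x)\,dx$ for $n\ge1$; i.e. $N_{0,n}$ is the $(n+1)$-fold convolution of $\chi_{[0,1]}$ with itself (the Irwin–Hall density of a sum of $n+1$ independent Uniform$(0,1)$ variables). *)

From Stdlib Require Import Reals.
From Coquelicot Require Import Coquelicot.
Open Scope R_scope.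

Definition chi01 (t : R) : R :=
  if Rle_dec 0 t then (if Rle_dec t 1 then 1 else 0) else 0.

Fixpoint Bspl (n : nat) (t : R) : R :=
  match n with
  | O => chi01 t
  | S m => RInt (Bspl m) (t - 1) t
  end.

From Stdlib Require Import Reals Lra Lia Factorial.
From Coquelicot Require Import Coquelicot.
Open Scope R_scope.

(* The sum S(t) = Σ_n N_{0,n}(t) converges by comparison with Σ_n t^n/n!, and since
   N_{0,n+1}(t) = ∫_{t-1}^t N_{0,n}, it satisfies the delay equation S(t) = ∫_{t-1}^t S for t > 1.
   For such a function, bounds m <= S <= M on a window of length 1 persist at all later times,
   and on the next window they shrink by the factor 15/16: if S is below (m+M)/2 at the end of the
   window it stays below M - (M-m)/4 for a quarter of a unit, and the delay equation averages this
   gain in (symmetrically otherwise).  So S converges.  The limit is identified by the invariant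
   ∫_{t-1}^t (y - t + 1) S(y) dy = Σ_n (∫_0^t N_{0,n} - ∫_0^t N_{0,n+1}) = ∫_0^t N_{0,0} = 1,
   which tends to L/2 when S tends to L. *)

Lemma continuous_lipschitz (f : R -> R) (K x : R) :
  (forall y z, Rabs (f y - f z) <= K * Rabs (y - z)) -> continuous f x.
Proof.
  intros Hf. apply continuity_pt_filterlim. intros eps Heps.
  assert (HK : 0 < Rabs K + 1) by (pose proof (Rabs_pos K); lra).
  exists (eps / (Rabs K + 1)). split; [apply Rdiv_lt_0_compat; lra |].
  intros y [_ Hy]. simpl in Hy. unfold R_dist in *.
  apply Rle_lt_trans with ((Rabs K + 1) * Rabs (y - x)).
  - eapply Rle_trans; [apply Hf |].
    apply Rmult_le_compat_r; [apply Rabs_pos | pose proof (Rle_abs K); lra].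
  - apply Rmult_lt_compat_l with (r := Rabs K + 1) in Hy; [| lra].
    replace ((Rabs K + 1) * (eps / (Rabs K + 1))) with eps in Hy by (field; lra).
    exact Hy.
Qed.

Lemma ex_RInt_lipschitz (f : R -> R) (K a b : R) :
  (forall y z, Rabs (f y - f z) <= K * Rabs (y - z)) -> ex_RInt f a b.
Proof.
  intros Hf. apply (ex_RInt_continuous (V := R_CompleteNormedModule)).
  intros z _. exact (continuous_lipschitz f K z Hf).
Qed.

Lemma RInt_const_R (c a b : R) : RInt (fun _ => c) a b = (b - a) * c.
Proof. rewrite RInt_const. reflexivity. Qed.

Section EverywhereIntegrable.

Variable f : R -> R.
Hypothesis f_int : forall a b, ex_RInt f a b.

Lemma RInt_Chasles_R a b c : RInt f a b + RInt f b c = RInt f a c.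
Proof. exact (RInt_Chasles f a b c (f_int a b) (f_int b c)). Qed.

Lemma RInt_swap_R a b : RInt f b a = - RInt f a b.
Proof. rewrite <- (opp_RInt_swap f a b (f_int a b)). reflexivity. Qed.

Hypothesis f_bounded : forall x, Rabs (f x) <= 1.

Lemma RInt_abs_le_dist a b : Rabs (RInt f a b) <= Rabs (b - a).
Proof.
  destruct (Rle_dec a b) as [Hab | Hab].
  - rewrite (Rabs_right (b - a)) by lra. rewrite <- (Rmult_1_r (b - a)).
    apply abs_RInt_le_const; auto.
  - rewrite RInt_swap_R, Rabs_Ropp, (Rabs_left (b - a)) by lra.
    replace (- (b - a)) with ((a - b) * 1) by ring.
    apply abs_RInt_le_const; auto; lra.
Qed.

Lemma RInt_lipschitz c y z : Rabs (RInt f c y - RInt f c z) <= Rabs (y - z).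
Proof.
  rewrite <- (RInt_Chasles_R c z y). ring_simplify (RInt f c z + RInt f z y - RInt f c z).
  apply RInt_abs_le_dist.
Qed.

Lemma RInt_window_lipschitz y z :
  Rabs (RInt f (y - 1) y - RInt f (z - 1) z) <= 2 * Rabs (y - z).
Proof.
  assert (E : forall u, RInt f (u - 1) u = RInt f 0 u - RInt f 0 (u - 1)).
  { intros u. rewrite <- (RInt_Chasles_R 0 (u - 1) u). lra. }
  rewrite !E.
  pose proof (RInt_lipschitz 0 y z). pose proof (RInt_lipschitz 0 (y - 1) (z - 1)).
  replace (y - 1 - (z - 1)) with (y - z) in * by ring.
  replace (RInt f 0 y - RInt f 0 (y - 1) - (RInt f 0 z - RInt f 0 (z - 1)))
    with ((RInt f 0 y - RInt f 0 z) + - (RInt f 0 (y - 1) - RInt f 0 (z - 1))) by ring.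
  eapply Rle_trans; [apply Rabs_triang |]. rewrite Rabs_Ropp. lra.
Qed.

End EverywhereIntegrable.

Lemma RInt_minus_R (f g : R -> R) a b :
  ex_RInt f a b -> ex_RInt g a b -> RInt (fun x => f x - g x) a b = RInt f a b - RInt g a b.
Proof. exact (RInt_minus f g a b). Qed.

Lemma RInt_shift1 (f : R -> R) a b :
  ex_RInt f (a - 1) (b - 1) -> RInt (fun y => f (y - 1)) a b = RInt f (a - 1) (b - 1).
Proof.
  intros Hf.
  rewrite (RInt_ext _ (fun y => scal 1 (f (1 * y + -1)))).
  - replace (a - 1) with (1 * a + -1) in * by ring.
    replace (b - 1) with (1 * b + -1) in * by ring.
    exact (RInt_comp_lin f 1 (-1) a b Hf).
  - intros x _. rewrite (scal_one (V := R_NormedModule)). f_equal. ring.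
Qed.

Lemma Series_nonneg (a : nat -> R) : (forall n, 0 <= a n) -> ex_series a -> 0 <= Series a.
Proof.
  intros Ha Hex. replace 0 with (Series (fun n => 0 * a n)).
  - apply Series_le; auto. intros n. rewrite Rmult_0_l. split; [lra | apply Ha].
  - rewrite Series_scal_l. ring.
Qed.

Lemma ex_series_dominated (a c : nat -> R) :
  (forall n, 0 <= a n <= c n) -> ex_series c -> ex_series a.
Proof.
  intros Hac Hc. apply (ex_series_le (V := R_CompleteNormedModule) a c); auto.
  intros n. change (Rabs (a n) <= c n). pose proof (Hac n). rewrite Rabs_right; lra.
Qed.

Lemma sum_f_R0_le_Series (a : nat -> R) N :
  (forall n, 0 <= a n) -> ex_series a -> sum_f_R0 a N <= Series a.
Proof.
  intros Ha Hex. rewrite (Series_incr_n a (S N)) by (auto; lia). simpl pred.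
  assert (0 <= Series (fun k => a (S N + k)%nat)); [| lra].
  apply Series_nonneg; auto. apply ex_series_incr_n. exact Hex.
Qed.

Lemma is_series_sum_f_R0 (a : nat -> R) l : is_series a l <-> is_lim_seq (sum_f_R0 a) l.
Proof.
  change (is_lim_seq (sum_n a) l <-> is_lim_seq (sum_f_R0 a) l).
  split; apply is_lim_seq_ext; intros n; rewrite sum_n_Reals; reflexivity.
Qed.

Lemma RInt_sum_f_R0 (f : nat -> R -> R) a b N : (forall n, ex_RInt (f n) a b) ->
  ex_RInt (fun x => sum_f_R0 (fun n => f n x) N) a b /\
  RInt (fun x => sum_f_R0 (fun n => f n x) N) a b = sum_f_R0 (fun n => RInt (f n) a b) N.
Proof.
  intros Hf. induction N as [| N [IHex IHeq]]; simpl; [auto |]. split.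
  - exact (ex_RInt_plus _ _ a b IHex (Hf (S N))).
  - rewrite <- IHeq. exact (RInt_plus _ _ a b IHex (Hf (S N))).
Qed.

Lemma Series_RInt_le (f : nat -> R -> R) (a b : R) (hi : R -> R) :
  a <= b -> (forall n, ex_RInt (f n) a b) -> ex_RInt hi a b ->
  (forall n x, a <= x <= b -> 0 <= f n x) ->
  (forall x, a <= x <= b -> ex_series (fun n => f n x) /\ Series (fun n => f n x) <= hi x) ->
  ex_series (fun n => RInt (f n) a b) ->
  Series (fun n => RInt (f n) a b) <= RInt hi a b.
Proof.
  intros Hab Hf Hhi Hpos Hser Hex.
  assert (Hpartial : forall N, sum_f_R0 (fun n => RInt (f n) a b) N <= RInt hi a b).
  { intros N. destruct (RInt_sum_f_R0 f a b N Hf) as [HexN <-].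
    apply RInt_le; auto. intros x Hx. destruct (Hser x ltac:(lra)) as [Hx1 Hx2].
    pose proof (sum_f_R0_le_Series (fun n => f n x) N (fun n => Hpos n x ltac:(lra)) Hx1).
    lra. }
  exact (is_lim_seq_le _ _ _ _ Hpartial
           (proj1 (is_series_sum_f_R0 _ _) (Series_correct _ Hex)) (is_lim_seq_const _)).
Qed.

Lemma Series_RInt_bounds (f : nat -> R -> R) (c : nat -> R) (a b : R) (lo hi : R -> R) :
  a <= b -> (forall n x, a <= x <= b -> 0 <= f n x <= c n) -> ex_series c ->
  (forall n, ex_RInt (f n) a b) -> ex_RInt lo a b -> ex_RInt hi a b ->
  (forall x, a <= x <= b -> lo x <= Series (fun n => f n x) <= hi x) ->
  ex_series (fun n => RInt (f n) a b) /\
  RInt lo a b <= Series (fun n => RInt (f n) a b) <= RInt hi a b.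
Proof.
  intros Hab Hfc Hc Hf Hlo Hhi Hbounds.
  assert (Hser : forall x, a <= x <= b -> ex_series (fun n => f n x)).
  { intros x Hx. apply ex_series_dominated with c; auto. }
  assert (Hint : forall n, 0 <= RInt (f n) a b <= (b - a) * c n).
  { intros n. split.
    - apply RInt_ge_0; auto. intros x Hx. apply Hfc. lra.
    - apply Rle_trans with (RInt (fun _ => c n) a b); [| rewrite RInt_const_R; lra].
      apply RInt_le; auto; [apply ex_RInt_const |]. intros x Hx. apply Hfc. lra. }
  assert (Hcab : ex_series (fun n => (b - a) * c n)) by exact (ex_series_scal_l (b - a) c Hc).
  assert (Hex : ex_series (fun n => RInt (f n) a b))
    by (apply ex_series_dominated with (1 := Hint); auto).
  split; [exact Hex | split].
  - (* The lower bound is the upper bound for the complementary terms [c n - f n x]. *)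
    assert (Hg : Series (fun n => RInt (fun x => c n - f n x) a b)
                 <= RInt (fun x => Series c - lo x) a b).
    { apply Series_RInt_le; auto.
      - intros n. apply (ex_RInt_minus _ _ a b (ex_RInt_const _ _ _) (Hf n)).
      - apply (ex_RInt_minus _ _ a b (ex_RInt_const _ _ _) Hlo).
      - intros n x Hx. pose proof (Hfc n x Hx). lra.
      - intros x Hx. split; [exact (ex_series_minus _ _ Hc (Hser x Hx)) |].
        rewrite Series_minus by auto. pose proof (Hbounds x Hx). lra.
      - eapply ex_series_ext; [| exact (ex_series_minus _ _ Hcab Hex)].
        intros n. simpl. rewrite RInt_minus_R, RInt_const_R; auto. apply ex_RInt_const. }
    rewrite RInt_minus_R, RInt_const_R in Hg; [| apply ex_RInt_const | exact Hlo].
    rewrite (Series_ext _ (fun n => (b - a) * c n - RInt (f n) a b)) in Hg.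
    + rewrite Series_minus, Series_scal_l in Hg by auto. lra.
    + intros n. rewrite RInt_minus_R, RInt_const_R; auto. apply ex_RInt_const.
  - apply Series_RInt_le; auto.
    + intros n x Hx. apply Hfc. exact Hx.
    + intros x Hx. split; [apply Hser; auto | apply Hbounds; auto].
Qed.

Definition exp_term (x : R) (n : nat) : R := x ^ n / INR (fact n).

Lemma is_series_exp_term x : is_series (exp_term x) (exp x).
Proof.
  eapply is_series_ext; [| exact (is_exp_Reals x)].
  intros n. unfold exp_term, scal. simpl. unfold mult. simpl.
  rewrite pow_n_pow. unfold Rdiv. ring.
Qed.

Lemma exp_term_nonneg x n : 0 <= x -> 0 <= exp_term x n.
Proof. intros. apply Rdiv_le_0_compat; [apply pow_le; auto | apply INR_fact_lt_0]. Qed.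

Lemma exp_term_le x y n : 0 <= x <= y -> exp_term x n <= exp_term y n.
Proof.
  intros Hxy. unfold exp_term, Rdiv. apply Rmult_le_compat_r.
  - left. apply Rinv_0_lt_compat, INR_fact_lt_0.
  - apply pow_incr. exact Hxy.
Qed.

Lemma is_RInt_exp_term n t : is_RInt (fun x => exp_term x n) 0 t (exp_term t (S n)).
Proof.
  apply (is_RInt_ext (fun x => scal (/ INR (fact n)) (x ^ n))).
  { intros x _. unfold exp_term, scal. simpl. unfold mult. simpl. unfold Rdiv. ring. }
  assert (E : exp_term t (S n) = / INR (fact n) * (t ^ S n / INR (S n) - 0 ^ S n / INR (S n))).
  { unfold exp_term. rewrite pow_i by lia.
    change (fact (S n)) with (S n * fact n)%nat. rewrite mult_INR.
    pose proof (INR_fact_neq_0 n). pose proof (not_0_INR (S n) (Nat.neq_succ_0 n)).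
    field. auto. }
  rewrite E. apply (is_RInt_scal (V := R_NormedModule)), is_RInt_pow.
Qed.

Lemma RInt_le_exp_term (f : R -> R) n t : 0 <= t -> ex_RInt f 0 t ->
  (forall x, 0 <= x -> f x <= exp_term x n) -> RInt f 0 t <= exp_term t (S n).
Proof.
  intros Ht Hf Hle. rewrite <- (is_RInt_unique _ _ _ _ (is_RInt_exp_term n t)).
  apply RInt_le; auto; [eexists; apply is_RInt_exp_term |].
  intros x Hx. apply Hle. lra.
Qed.

(* [A a b] stands for the integral of [F] over [a, b]; only its monotonicity and additivity are
   used, which spares proving that [F] is Riemann integrable. *)
Record delay_average (F : R -> R) (A : R -> R -> R) : Prop := {
  avg_le : forall a b M, a <= b -> (forall x, a <= x <= b -> F x <= M) -> A a b <= (b - a) * M;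
  avg_ge : forall a b m, a <= b -> (forall x, a <= x <= b -> m <= F x) -> (b - a) * m <= A a b;
  avg_Chasles : forall a c b, a <= c <= b -> A a b = A a c + A c b;
  avg_delay : forall s, 1 < s -> F s = A (s - 1) s;
  avg_loc_bounded : forall a b, exists B, forall x, a <= x <= b -> Rabs (F x) <= B }.

Arguments avg_le {F A}.
Arguments avg_ge {F A}.
Arguments avg_Chasles {F A}.
Arguments avg_delay {F A}.
Arguments avg_loc_bounded {F A}.

Lemma delay_average_opp F A :
  delay_average F A -> delay_average (fun x => - F x) (fun a b => - A a b).
Proof.
  intros HF. split.
  - intros a b M Hab HM.
    assert ((b - a) * - M <= A a b); [| lra].
    apply (avg_ge HF); auto. intros x Hx. specialize (HM x Hx). lra.
  - intros a b m Hab Hm.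
    assert (A a b <= (b - a) * - m); [| lra].
    apply (avg_le HF); auto. intros x Hx. specialize (Hm x Hx). lra.
  - intros a c b Hc. rewrite (avg_Chasles HF a c b Hc). ring.
  - intros s Hs. rewrite (avg_delay HF s Hs). reflexivity.
  - intros a b. destruct (avg_loc_bounded HF a b) as [B HB].
    exists B. intros x Hx. rewrite Rabs_Ropp. auto.
Qed.

Lemma exists_pow_lt (q D e : R) : 0 <= q < 1 -> 0 < e -> exists j, D * q ^ j < e.
Proof.
  intros Hq He. destruct (Rle_lt_dec D 0) as [HD | HD].
  - exists 0%nat. simpl. lra.
  - destruct (pow_lt_1_zero q ltac:(rewrite Rabs_right; lra) (e / D)) as [j Hj].
    { apply Rdiv_lt_0_compat; lra. }
    exists j. specialize (Hj j (le_n j)).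
    rewrite Rabs_right in Hj by (apply Rle_ge, pow_le; lra).
    apply Rmult_lt_compat_l with (r := D) in Hj; auto.
    replace (D * (e / D)) with e in Hj by (field; lra). exact Hj.
Qed.

Section DelayAverage.

Variables (F : R -> R) (A : R -> R -> R).
Hypothesis HF : delay_average F A.

(* Starting from a local bound, each use of the delay equation halves the excess over [M],
   since at most half of the window [x - 1, x] lies beyond [a]. *)
Lemma delay_average_max_half a M : 1 < a ->
  (forall x, a - 1 <= x <= a -> F x <= M) -> forall x, a <= x <= a + /2 -> F x <= M.
Proof.
  intros Ha Hwin.
  destruct (avg_loc_bounded HF a (a + /2)) as [B HB].
  set (D := Rabs (B - M)).
  assert (Hexcess : forall j x, a <= x <= a + /2 -> F x <= M + D * (/2) ^ j).
  { induction j as [| j IH]; intros x Hx.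
    - specialize (HB x Hx). pose proof (Rle_abs (F x)). pose proof (Rle_abs (B - M)).
      unfold D. simpl. lra.
    - assert (Hpow : 0 <= D * (/2) ^ j)
        by (apply Rmult_le_pos; [apply Rabs_pos | apply pow_le; lra]).
      rewrite (avg_delay HF x), (avg_Chasles HF (x - 1) a x) by lra.
      assert (A (x - 1) a <= (a - (x - 1)) * M).
      { apply (avg_le HF); [lra |]. intros y Hy. apply Hwin. lra. }
      assert (A a x <= (x - a) * (M + D * (/2) ^ j)).
      { apply (avg_le HF); [lra |]. intros y Hy. apply IH. lra. }
      assert ((x - a) * (D * (/2) ^ j) <= /2 * (D * (/2) ^ j)) by (apply Rmult_le_compat_r; lra).
      simpl. lra. }
  intros x Hx. destruct (Rle_dec (F x) M) as [| Hgt]; auto.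
  destruct (exists_pow_lt (/2) D (F x - M)) as [j Hj]; [lra | lra |].
  specialize (Hexcess j x Hx). lra.
Qed.

Lemma delay_average_max a M : 1 < a ->
  (forall x, a - 1 <= x <= a -> F x <= M) -> forall x, a - 1 <= x -> F x <= M.
Proof.
  intros Ha Hwin.
  assert (Hk : forall k, forall x, a - 1 <= x <= a + INR k / 2 -> F x <= M).
  { induction k as [| k IH]; intros x Hx.
    - apply Hwin. simpl in Hx. lra.
    - pose proof (pos_INR k). rewrite S_INR in Hx.
      destruct (Rle_dec x (a + INR k / 2)); [apply IH; lra |].
      apply (delay_average_max_half (a + INR k / 2)); [lra | | lra].
      intros y Hy. apply IH. lra. }
  intros x Hx. destruct (INR_unbounded (2 * (x - a))) as [k Hk'].
  apply (Hk k). lra.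
Qed.

End DelayAverage.

Lemma delay_average_bounds F A a m M : delay_average F A -> 1 < a ->
  (forall x, a - 1 <= x <= a -> m <= F x <= M) -> forall x, a - 1 <= x -> m <= F x <= M.
Proof.
  intros HF Ha Hwin x Hx. split.
  - assert (- F x <= - m); [| lra].
    apply (delay_average_max _ _ (delay_average_opp F A HF) a); auto.
    intros y Hy. specialize (Hwin y Hy). lra.
  - apply (delay_average_max F A HF a); auto. intros y Hy. apply Hwin. exact Hy.
Qed.

Section Contraction.

Variables (F : R -> R) (A : R -> R -> R) (a m M : R).
Hypothesis HF : delay_average F A.
Hypothesis Ha : 1 < a.
Hypothesis Hbounds : forall x, a - 1 <= x -> m <= F x <= M.

Lemma delay_average_increment s' s : a <= s' <= s -> F s - F s' <= (s - s') * (M - m).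
Proof.
  intros Hs.
  rewrite (avg_delay HF s), (avg_delay HF s') by lra.
  assert (E : A (s' - 1) (s - 1) + A (s - 1) s = A (s' - 1) s' + A s' s).
  { rewrite <- (avg_Chasles HF (s' - 1) (s - 1) s), <- (avg_Chasles HF (s' - 1) s' s); lra. }
  assert (A s' s <= (s - s') * M).
  { apply (avg_le HF); [lra |]. intros x Hx. apply Hbounds. lra. }
  assert ((s - 1 - (s' - 1)) * m <= A (s' - 1) (s - 1)).
  { apply (avg_ge HF); [lra |]. intros x Hx. apply Hbounds. lra. }
  lra.
Qed.

(* Near [a] the value stays below [M - (M - m)/4]; the delay equation spreads this gain
   over the next window. *)
Lemma delay_average_contract_up : F a <= (m + M) / 2 ->
  forall x, a <= x <= a + 1 -> F x <= M - (M - m) / 16.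
Proof.
  intros Hmid.
  assert (Hosc : 0 <= M - m) by (pose proof (Hbounds a); lra).
  assert (Hnear : forall x, a <= x <= a + /4 -> F x <= M - (M - m) / 4).
  { intros x Hx. pose proof (delay_average_increment a x ltac:(lra)).
    assert ((x - a) * (M - m) <= /4 * (M - m)) by (apply Rmult_le_compat_r; lra).
    lra. }
  intros x Hx. destruct (Rle_dec x (a + /4)); [pose proof (Hnear x ltac:(lra)); lra |].
  rewrite (avg_delay HF x), (avg_Chasles HF (x - 1) a x), (avg_Chasles HF a (a + /4) x) by lra.
  assert (A (x - 1) a <= (a - (x - 1)) * M).
  { apply (avg_le HF); [lra |]. intros y Hy. apply Hbounds. lra. }
  assert (A a (a + /4) <= (a + /4 - a) * (M - (M - m) / 4)).
  { apply (avg_le HF); [lra |]. intros y Hy. apply Hnear. lra. }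
  assert (A (a + /4) x <= (x - (a + /4)) * M).
  { apply (avg_le HF); [lra |]. intros y Hy. apply Hbounds. lra. }
  lra.
Qed.

End Contraction.

Lemma delay_average_contract F A a m M : delay_average F A -> 1 < a ->
  (forall x, a - 1 <= x <= a -> m <= F x <= M) ->
  exists m' M', M' - m' <= 15/16 * (M - m) /\ forall x, a <= x <= a + 1 -> m' <= F x <= M'.
Proof.
  intros HF Ha Hwin.
  pose proof (delay_average_bounds F A a m M HF Ha Hwin) as Hbounds.
  destruct (Rle_dec (F a) ((m + M) / 2)).
  - exists m, (M - (M - m) / 16). split; [lra |].
    intros x Hx. split; [apply Hbounds; lra |].
    apply (delay_average_contract_up F A a m M); auto.
  - exists (m + (M - m) / 16), M. split; [lra |].
    intros x Hx. split; [| apply Hbounds; lra].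
    assert (- F x <= - m - (- m - - M) / 16); [| lra].
    apply (delay_average_contract_up _ _ a (- M) (- m) (delay_average_opp F A HF)); auto; [| lra].
    intros y Hy. specialize (Hbounds y Hy). lra.
Qed.

Lemma delay_average_oscillation F A m0 M0 : delay_average F A ->
  (forall x, 1 <= x <= 2 -> m0 <= F x <= M0) ->
  forall k, exists m M, M - m <= (15/16) ^ k * (M0 - m0) /\
    forall x, 1 + INR k <= x <= 2 + INR k -> m <= F x <= M.
Proof.
  intros HF H0. induction k as [| k (m & M & Hosc & Hwin)].
  - exists m0, M0. simpl. split; [lra |]. intros x Hx. apply H0. lra.
  - pose proof (pos_INR k).
    destruct (delay_average_contract F A (2 + INR k) m M HF) as (m' & M' & Hosc' & Hwin');
      [lra | intros x Hx; apply Hwin; lra |].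
    exists m', M'. split.
    + assert (15/16 * (M - m) <= 15/16 * ((15/16) ^ k * (M0 - m0)))
        by (apply Rmult_le_compat_l; lra).
      simpl. lra.
    + intros x Hx. rewrite S_INR in Hx. apply Hwin'. lra.
Qed.

Lemma delay_average_is_lim F A L : delay_average F A ->
  (forall t m M, 1 <= t -> (forall x, t - 1 <= x <= t -> m <= F x <= M) -> m <= L <= M) ->
  is_lim F p_infty L.
Proof.
  intros HF HL. apply is_lim_spec. intros eps.
  destruct (avg_loc_bounded HF 1 2) as [B HB].
  destruct (exists_pow_lt (15/16) (2 * B) eps) as [k Hk]; [lra | apply cond_pos |].
  destruct (delay_average_oscillation F A (- B) B HF) with (k := k) as (m & M & Hosc & Hwin).
  { intros x Hx. apply Rabs_le_between, HB, Hx. }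
  pose proof (pos_INR k).
  assert (HmL : m <= L <= M) by (apply (HL (2 + INR k)); [lra | intros; apply Hwin; lra]).
  exists (1 + INR k). intros x Hx.
  pose proof (delay_average_bounds F A (2 + INR k) m M HF ltac:(lra)
                (fun y Hy => Hwin y ltac:(lra)) x ltac:(lra)).
  apply Rabs_lt_between'. lra.
Qed.

Lemma chi01_range t : 0 <= chi01 t <= 1.
Proof. unfold chi01. destruct (Rle_dec 0 t), (Rle_dec t 1); lra. Qed.

Lemma chi01_lt0 t : t < 0 -> chi01 t = 0.
Proof. unfold chi01. destruct (Rle_dec 0 t); lra. Qed.

Lemma chi01_gt1 t : 1 < t -> chi01 t = 0.
Proof. unfold chi01. destruct (Rle_dec 0 t), (Rle_dec t 1); lra. Qed.

Lemma chi01_unit t : 0 <= t <= 1 -> chi01 t = 1.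
Proof. unfold chi01. destruct (Rle_dec 0 t), (Rle_dec t 1); lra. Qed.

Lemma RInt_chi01_unit : RInt chi01 0 1 = 1.
Proof.
  rewrite (RInt_ext _ (fun _ => 1)), RInt_const_R; [lra |].
  intros x. rewrite Rmin_left, Rmax_right by lra. intros. apply chi01_unit. lra.
Qed.

Lemma ex_RInt_chi01 a b : ex_RInt chi01 a b.
Proof.
  assert (Hcst : forall c a' b', (forall x, Rmin a' b' < x < Rmax a' b' -> c = chi01 x) ->
                   ex_RInt chi01 a' b').
  { intros c a' b' Hc. apply (ex_RInt_ext (fun _ => c)); [exact Hc | apply ex_RInt_const]. }
  assert (Hfrom0 : forall x, ex_RInt chi01 0 x).
  { intros x. destruct (Rle_dec x 0); [| destruct (Rle_dec x 1)].
    - apply (Hcst 0). rewrite Rmin_right, Rmax_left by lra.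
      intros y Hy. symmetry. apply chi01_lt0. lra.
    - apply (Hcst 1). rewrite Rmin_left, Rmax_right by lra.
      intros y Hy. symmetry. apply chi01_unit. lra.
    - apply ex_RInt_Chasles with 1.
      + apply (Hcst 1). rewrite Rmin_left, Rmax_right by lra.
        intros y Hy. symmetry. apply chi01_unit. lra.
      + apply (Hcst 0). rewrite Rmin_left, Rmax_right by lra.
        intros y Hy. symmetry. apply chi01_gt1. lra. }
  apply ex_RInt_Chasles with 0; [apply ex_RInt_swap |]; apply Hfrom0.
Qed.

Lemma Bspl_range_ex_RInt n :
  (forall t, 0 <= Bspl n t <= 1) /\ (forall a b, ex_RInt (Bspl n) a b).
Proof.
  induction n as [| n [Hrange Hint]].
  - split; [apply chi01_range | apply ex_RInt_chi01].
  - split.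
    + intros t. simpl. split.
      * apply RInt_ge_0; auto; [lra |]. intros. apply Hrange.
      * apply Rle_trans with (RInt (fun _ => 1) (t - 1) t); [| rewrite RInt_const_R; lra].
        apply RInt_le; auto; [lra | apply ex_RInt_const |]. intros. apply Hrange.
    + intros a b. apply (ex_RInt_lipschitz _ 2). intros y z.
      apply (RInt_window_lipschitz (Bspl n)); auto.
      intros x. pose proof (Hrange x). rewrite Rabs_right; lra.
Qed.

Lemma Bspl_range n t : 0 <= Bspl n t <= 1.
Proof. apply Bspl_range_ex_RInt. Qed.

Lemma ex_RInt_Bspl n a b : ex_RInt (Bspl n) a b.
Proof. apply Bspl_range_ex_RInt. Qed.

Lemma Rabs_Bspl_le_1 n t : Rabs (Bspl n t) <= 1.
Proof. pose proof (Bspl_range n t). rewrite Rabs_right; lra. Qed.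

Lemma Bspl_lt0 n t : t < 0 -> Bspl n t = 0.
Proof.
  revert t. induction n as [| n IH]; intros t Ht; [apply chi01_lt0; auto |].
  simpl. rewrite (RInt_ext _ (fun _ => 0)), RInt_const_R; [lra |].
  intros x. rewrite Rmin_left, Rmax_right by lra. intros. apply IH. lra.
Qed.

Definition Bprim n t := RInt (Bspl n) 0 t.

Lemma Bprim_le0 n t : t <= 0 -> Bprim n t = 0.
Proof.
  intros Ht. unfold Bprim. rewrite (RInt_ext _ (fun _ => 0)), RInt_const_R; [lra |].
  intros x. rewrite Rmin_right, Rmax_left by lra. intros. apply Bspl_lt0. lra.
Qed.

Lemma Bprim_nonneg n t : 0 <= Bprim n t.
Proof.
  destruct (Rle_dec t 0); [rewrite Bprim_le0; auto; lra |].
  apply RInt_ge_0; [lra | apply ex_RInt_Bspl |]. intros. apply Bspl_range.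
Qed.

Lemma Bprim_lipschitz n y z : Rabs (Bprim n y - Bprim n z) <= 1 * Rabs (y - z).
Proof. rewrite Rmult_1_l. apply RInt_lipschitz; [apply ex_RInt_Bspl | apply Rabs_Bspl_le_1]. Qed.

Lemma ex_RInt_Bprim n a b : ex_RInt (Bprim n) a b.
Proof. apply (ex_RInt_lipschitz _ 1), Bprim_lipschitz. Qed.

Lemma RInt_Bspl_Bprim n a b : RInt (Bspl n) a b = Bprim n b - Bprim n a.
Proof. unfold Bprim. rewrite <- (RInt_Chasles_R _ (ex_RInt_Bspl n) 0 a b). lra. Qed.

Lemma Bspl_S n t : Bspl (S n) t = Bprim n t - Bprim n (t - 1).
Proof. apply RInt_Bspl_Bprim. Qed.

Lemma Bprim_0 t : 1 <= t -> Bprim 0 t = 1.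
Proof.
  intros Ht. change (RInt chi01 0 t = 1).
  rewrite <- (RInt_Chasles_R _ ex_RInt_chi01 0 1 t), RInt_chi01_unit.
  rewrite (RInt_ext _ (fun _ => 0)), RInt_const_R; [lra |].
  intros x. rewrite Rmin_left, Rmax_right by lra. intros. apply chi01_gt1. lra.
Qed.

Lemma Bprim_S n t : Bprim (S n) t = RInt (Bprim n) (t - 1) t.
Proof.
  assert (Hshift : forall a b, ex_RInt (fun y => Bprim n (y - 1)) a b).
  { intros a b. apply (ex_RInt_lipschitz _ 1). intros y z.
    replace (y - z) with (y - 1 - (z - 1)) by ring. apply Bprim_lipschitz. }
  unfold Bprim at 1.
  rewrite (RInt_ext (V := R_CompleteNormedModule) _ (fun y => Bprim n y - Bprim n (y - 1)))
    by (intros; apply Bspl_S).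
  rewrite RInt_minus_R; [| apply ex_RInt_Bprim | apply Hshift].
  rewrite RInt_shift1 by apply ex_RInt_Bprim.
  replace (0 - 1) with (-1) by ring.
  assert (Hneg : RInt (Bprim n) (-1) 0 = 0).
  { rewrite (RInt_ext _ (fun _ => 0)), RInt_const_R; [lra |].
    intros x. rewrite Rmin_left, Rmax_right by lra. intros. apply Bprim_le0. lra. }
  pose proof (RInt_Chasles_R _ (ex_RInt_Bprim n) (-1) 0 (t - 1)).
  pose proof (RInt_Chasles_R _ (ex_RInt_Bprim n) 0 (t - 1) t).
  lra.
Qed.

Lemma Bspl_le_exp_term n t : 0 <= t -> Bspl n t <= exp_term t n.
Proof.
  revert t. induction n as [| n IH]; intros t Ht.
  - unfold exp_term. simpl. pose proof (chi01_range t). lra.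
  - rewrite Bspl_S. pose proof (Bprim_nonneg n (t - 1)).
    pose proof (RInt_le_exp_term (Bspl n) n t Ht (ex_RInt_Bspl n 0 t) IH).
    unfold Bprim in *. lra.
Qed.

Lemma Bprim_le_exp_term n t : 0 <= t -> Bprim n t <= exp_term t (S n).
Proof.
  intros Ht. apply RInt_le_exp_term; auto; [apply ex_RInt_Bspl | apply Bspl_le_exp_term].
Qed.

Lemma Bspl_dominated n x b : x <= b -> 0 <= Bspl n x <= exp_term (Rabs b) n.
Proof.
  intros Hxb. split; [apply Bspl_range |].
  destruct (Rle_dec 0 x).
  - eapply Rle_trans; [apply Bspl_le_exp_term; auto |].
    apply exp_term_le. pose proof (Rle_abs b). lra.
  - rewrite Bspl_lt0 by lra. apply exp_term_nonneg, Rabs_pos.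
Qed.

Definition Bsum t := Series (fun n => Bspl n t).

Definition Bsum_int a b := Series (fun n => RInt (Bspl n) a b).

Lemma ex_series_Bspl t : ex_series (fun n => Bspl n t).
Proof.
  apply ex_series_dominated with (exp_term (Rabs t)).
  - intros n. apply Bspl_dominated. lra.
  - eexists. apply is_series_exp_term.
Qed.

Lemma Bsum_bounds x b : x <= b -> 0 <= Bsum x <= exp (Rabs b).
Proof.
  intros Hxb. split.
  - apply Series_nonneg; [intros; apply Bspl_range | apply ex_series_Bspl].
  - rewrite <- (is_series_unique _ _ (is_series_exp_term (Rabs b))).
    apply Series_le; [intros; apply Bspl_dominated; auto | eexists; apply is_series_exp_term].
Qed.

Lemma Bsum_int_bounds a b lo hi : a <= b -> (forall x, a <= x <= b -> lo <= Bsum x <= hi) ->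
  ex_series (fun n => RInt (Bspl n) a b) /\ (b - a) * lo <= Bsum_int a b <= (b - a) * hi.
Proof.
  intros Hab Hlohi.
  destruct (Series_RInt_bounds Bspl (exp_term (Rabs b)) a b (fun _ => lo) (fun _ => hi) Hab)
    as [Hex Hbounds]; rewrite ?RInt_const_R in *; auto.
  - intros n x Hx. apply Bspl_dominated. lra.
  - eexists. apply is_series_exp_term.
  - intros. apply ex_RInt_Bspl.
  - apply ex_RInt_const.
  - apply ex_RInt_const.
Qed.

Lemma ex_series_RInt_Bspl a b : a <= b -> ex_series (fun n => RInt (Bspl n) a b).
Proof.
  intros Hab. apply (Bsum_int_bounds a b 0 (exp (Rabs b))); auto.
  intros. apply Bsum_bounds. lra.
Qed.

Lemma Bsum_delay_average : delay_average Bsum Bsum_int.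
Proof.
  split.
  - intros a b M Hab HM. apply (Bsum_int_bounds a b 0 M); auto.
    intros x Hx. split; [apply (Bsum_bounds x b); lra | auto].
  - intros a b m Hab Hm. apply (Bsum_int_bounds a b m (exp (Rabs b))); auto.
    intros x Hx. split; [auto | apply (Bsum_bounds x b); lra].
  - intros a c b Hc. unfold Bsum_int.
    rewrite <- Series_plus by (apply ex_series_RInt_Bspl; lra).
    apply Series_ext. intros n. symmetry. apply RInt_Chasles_R, ex_RInt_Bspl.
  - intros s Hs. unfold Bsum, Bsum_int. rewrite Series_incr_1 by apply ex_series_Bspl.
    simpl Bspl at 1. rewrite chi01_gt1 by lra. apply Rplus_0_l.
  - intros a b. exists (exp (Rabs b)). intros x Hx.
    pose proof (Bsum_bounds x b ltac:(lra)). rewrite Rabs_right; lra.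
Qed.

Lemma RInt_Bspl_window_telescope n t :
  RInt (fun y => RInt (Bspl n) y t) (t - 1) t = Bprim n t - Bprim (S n) t.
Proof.
  rewrite (RInt_ext (V := R_CompleteNormedModule) _ (fun y => Bprim n t - Bprim n y))
    by (intros; apply RInt_Bspl_Bprim).
  rewrite RInt_minus_R, RInt_const_R, Bprim_S; [lra | apply ex_RInt_const | apply ex_RInt_Bprim].
Qed.

Lemma Series_RInt_Bspl_window t :
  1 <= t -> Series (fun n => RInt (fun y => RInt (Bspl n) y t) (t - 1) t) = 1.
Proof.
  intros Ht. apply is_series_unique, is_series_sum_f_R0.
  apply (is_lim_seq_ext (fun N => Bprim 0 t - Bprim (S N) t)).
  - intros N. induction N as [| N IH].
    + rewrite <- RInt_Bspl_window_telescope. reflexivity.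
    + rewrite tech5, <- IH, RInt_Bspl_window_telescope. ring.
  - replace (Finite 1) with (Rbar_minus 1 0) by (simpl; f_equal; ring).
    apply is_lim_seq_minus'; [rewrite Bprim_0 by auto; apply is_lim_seq_const |].
    apply is_lim_seq_le_le with (fun _ => 0) (fun N => exp_term t (S (S N))).
    + intros N. split; [apply Bprim_nonneg | apply Bprim_le_exp_term; lra].
    + apply is_lim_seq_const.
    + apply (is_lim_seq_incr_1 (fun n => exp_term t (S n))), (is_lim_seq_incr_1 (exp_term t)).
      apply ex_series_lim_0. eexists. apply is_series_exp_term.
Qed.

Lemma affine_lipschitz t c y z : Rabs ((t - y) * c - (t - z) * c) <= Rabs c * Rabs (y - z).
Proof.
  replace ((t - y) * c - (t - z) * c) with ((z - y) * c) by ring.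
  rewrite Rabs_mult, (Rabs_minus_sym z y). lra.
Qed.

Lemma RInt_linear_window c t : RInt (fun y => (t - y) * c) (t - 1) t = c / 2.
Proof.
  apply is_RInt_unique.
  replace (c / 2) with (minus (- ((t - t) ^ 2) / 2 * c) (- ((t - (t - 1)) ^ 2) / 2 * c))
    by (change (- ((t - t) ^ 2) / 2 * c - - ((t - (t - 1)) ^ 2) / 2 * c = c / 2); field).
  apply (is_RInt_derive (fun y => - ((t - y) ^ 2) / 2 * c)).
  - intros x _. auto_derive; auto. field.
  - intros x _. apply (continuous_lipschitz _ (Rabs c)), affine_lipschitz.
Qed.

Lemma RInt_Bspl_dominated t n y :
  t - 1 <= y <= t -> 0 <= RInt (Bspl n) y t <= exp_term (Rabs t) n.
Proof.
  intros Hy. split.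
  - apply RInt_ge_0; [lra | apply ex_RInt_Bspl | intros; apply Bspl_range].
  - apply Rle_trans with (RInt (fun _ => exp_term (Rabs t) n) y t).
    + apply RInt_le; [lra | apply ex_RInt_Bspl | apply ex_RInt_const |].
      intros x Hx. apply Bspl_dominated. lra.
    + rewrite RInt_const_R. pose proof (exp_term_nonneg (Rabs t) n (Rabs_pos t)).
      assert ((t - y) * exp_term (Rabs t) n <= 1 * exp_term (Rabs t) n)
        by (apply Rmult_le_compat_r; lra).
      lra.
Qed.

(* For t >= 1, [∫_{t-1}^t (y - t + 1) Bsum y dy = 1], while the window bounds put it
   in [m/2, M/2]. *)
Lemma Bsum_window_bounds_2 t m M : 1 <= t ->
  (forall x, t - 1 <= x <= t -> m <= Bsum x <= M) -> m <= 2 <= M.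
Proof.
  intros Ht Hwin.
  assert (Hlin : forall c, ex_RInt (fun y => (t - y) * c) (t - 1) t).
  { intros c. apply (ex_RInt_lipschitz _ (Rabs c)), affine_lipschitz. }
  destruct (Series_RInt_bounds (fun n y => RInt (Bspl n) y t) (exp_term (Rabs t)) (t - 1) t
              (fun y => (t - y) * m) (fun y => (t - y) * M)) as [_ Hbounds].
  - lra.
  - exact (RInt_Bspl_dominated t).
  - eexists. apply is_series_exp_term.
  - intros n. apply (ex_RInt_lipschitz _ 1). intros y z. rewrite !RInt_Bspl_Bprim.
    replace (Bprim n t - Bprim n y - (Bprim n t - Bprim n z)) with (Bprim n z - Bprim n y) by ring.
    rewrite (Rabs_minus_sym y z). apply Bprim_lipschitz.
  - apply Hlin.
  - apply Hlin.
  - intros y Hy. refine (proj2 (Bsum_int_bounds y t m M _ _)); [lra |].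
    intros x Hx. apply Hwin. lra.
  - rewrite Series_RInt_Bspl_window, !RInt_linear_window in Hbounds by auto. lra.
Qed.

Theorem mainTheorem13 :
  (forall t : R, ex_series (fun n : nat => Bspl n t)) /\
  is_lim (fun t : R => Series (fun n : nat => Bspl n t)) p_infty 2.
Proof.
  split; [exact ex_series_Bspl |].
  exact (delay_average_is_lim Bsum Bsum_int 2 Bsum_delay_average Bsum_window_bounds_2).
Qed.
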